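(* Let $B,n'\ge1$ be integers, $n=2Bn'$, and $s\ge 0$. Let $f:\{0,1\}^{n'}\to\{\pm\tfrac12\}$ be a balanced function with $I(f)\le s$. Let $W=\mathrm{Span}\{f_z : z\in\{0,1\}^B\}\subseteq\mathcal{N}=\mathbb{C}^{2^n}$, where $f_z$ is defined below. Then $W$ has dimension at least $2^B$ and $W$ is $(\mathcal{E}_{\mathrm{bitflip}},2s)$ immune.
   Context: A function $g:\{0,1\}^m\to\mathbb{C}$ is identified with the vector $\sum_x g(x)|x\rangle\in\mathbb{C}^{2^m}$. For $g:\{0,1\}^m\to\mathbb{C}$ and $i\in[m]$, $I_i(g)=\mathbb{E}_{x\in\{0,1\}^m}|g(x)-g(x\oplus e_i)|^2$ (with $e_i$ the $i$-th unit vector) and $I(g)=\max_i I_i(g)$. Balanced means $f$ takes each of its two values on exactly half the inputs. Partition $[n]$ into $2B$ consecutive blocks of length $n'$; for $x\in\{0,1\}^n$, $i\in[B]$, $b\in\{0,1\}$, let $x_{i,b}\in\{0,1\}^{n'}$ be the restriction of $x$ to the $(2i-1+b)$-th block. For $z\in\{0,1\}^B$ set $f_z(x)=f(x_{1,z_1})\cdots f(x_{B,z_B})$. For $i\in[n]$, $S\subseteq\{0,1\}^{n-1}$, $E_{i,S}$ is the linear operator with $E_{i,S}|x\rangle=|x\oplus e_i\rangle$ if $(x_1,\dots,x_{i-1},x_{i+1},\dots,x_n)\in S$ and $E_{i,S}|x\rangle=|x\rangle$ otherwise; $\mathcal{E}_{\mathrm{bitflip}}=\{E_{i,S}: i\in[n],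 S\subseteq\{0,1\}^{n-1}\}$. A subspace $\mathcal{M}$ is $(\mathcal{E},\varepsilon)$ immune if for every $X\in\mathcal{E}$ and every $\phi\in\mathcal{M}$, $|\phi^*X\phi|\ge(1-\varepsilon)|\phi^*\phi|$. *)

From mathcomp Require Import all_boot all_order all_algebra.
From mathcomp Require Import zify.
Set Implicit Arguments. Unset Strict Implicit. Unset Printing Implicit Defensive.
Import Order.TTheory GRing.Theory Num.Theory.
Local Open Scope ring_scope.

Definition bits (m : nat) := {ffun 'I_m -> bool}.

Definition flip (m : nat) (x : bits m) (i : 'I_m) : bits m :=
  [ffun j => x j (+) (j == i)].

Section Defs.
Variable C : numClosedFieldType.

(* the Hilbert space C^{2^m}, identified with functions {0,1}^m -> C *)
Definition cvec (m : nat) := {ffun bits m -> C^o}.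

Definition infl_i (m : nat) (g : bits m -> C) (i : 'I_m) : C :=
  (#|{: bits m}|%:R)^-1 * \sum_(x : bits m) `|g x - g (flip x i)| ^+ 2.

Definition infl (m : nat) (g : bits m -> C) : C :=
  \big[Num.max/0]_(i < m) infl_i g i.

Definition balanced_pm_half (m : nat) (f : bits m -> C) : Prop :=
  (forall x, f x = 2^-1 \/ f x = - 2^-1) /\
  (#|[set x | f x == 2^-1]| * 2 = #|{: bits m}|)%N /\
  (#|[set x | f x == - 2^-1]| * 2 = #|{: bits m}|)%N.

Lemma blockpos_proof (B n' : nat) (i : 'I_B) (b : bool) (j : 'I_n') :
  ((2 * i + b) * n' + j < 2 * B * n')%N.
Proof.
have hi := ltn_ord i; have hj := ltn_ord j.
case: b => /=; nia.
Qed.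

Definition blockpos (B n' : nat) (i : 'I_B) (b : bool) (j : 'I_n') : 'I_(2 * B * n') :=
  Ordinal (blockpos_proof i b j).

(* x_{i,b}: restriction of x to the (2i-1+b)-th block (1-indexed i) *)
Definition xblock (B n' : nat) (x : bits (2 * B * n')) (i : 'I_B) (b : bool) : bits n' :=
  [ffun j => x (blockpos i b j)].

Definition fz (B n' : nat) (f : bits n' -> C) (z : bits B) : cvec (2 * B * n') :=
  [ffun x => \prod_(i < B) f (xblock x i (z i))].

Definition Wspace (B n' : nat) (f : bits n' -> C) : {vspace cvec (2 * B * n')} :=
  <<[seq fz f z | z : bits B]>>%VS.

Definition drop_coord (n : nat) (i : 'I_n) (x : bits n) : bits n.-1 :=
  [ffun j => x (lift i j)].

Definition ket (n : nat) (x : bits n) : cvec n := [ffun y => (y == x)%:R].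

Definition E_bitflip (n : nat) (i : 'I_n) (S : {set bits n.-1}) (phi : cvec n) : cvec n :=
  \sum_(x : bits n) phi x *: ket (if drop_coord i x \in S then flip x i else x).

Definition dotc (n : nat) (phi psi : cvec n) : C := \sum_(x : bits n) (phi x)^* * psi x.

Definition bitflip_immune (n : nat) (M : {vspace cvec n}) (eps : C) : Prop :=
  forall (i : 'I_n) (S : {set bits n.-1}) (phi : cvec n), phi \in M ->
    (1 - eps) * `|dotc phi phi| <= `|dotc phi (E_bitflip i S phi)|.

End Defs.

From mathcomp Require Import all_boot all_order all_algebra.
From mathcomp Require Import zify ring.
Import Order.TTheory GRing.Theory Num.Theory.
Set Implicit Arguments. Unset Strict Implicit. Unset Printing Implicit Defensive.
Local Open Scope ring_scope.

(* Cutting x into its 2B blocks of length n' identifies C^(2^n) with a tensor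
   product, and both f_z and its discrete derivative phi(x) - phi(x + e_p) along
   any coordinate p are product vectors, so their inner products factor over the
   blocks.  As f sums to zero, the f_z are pairwise orthogonal, and so are their
   derivatives along p; hence dim W = 2^B, and by Pythagoras the bound
   |D_p f_z|^2 <= 4s |f_z|^2, read off the single block containing p, extends to
   all phi in W.  Finally |phi|^2 - <phi, E phi> is half the squared norm of D_p phi
   restricted to the flipped pairs, a real number in [0, 2s |phi|^2]. *)

Section BlockCoordinates.
Variables B n' : nat.
Local Notation N := (2 * B * n')%N.

Lemma blocklen_gt0 (p : 'I_N) : (0 < n')%N.
Proof. by case: p; case: (n') => // p; rewrite muln0. Qed.

Lemma pos_block_proof (p : 'I_N) : (p %/ n' %/ 2 < B)%N.
Proof. by rewrite !ltn_divLR ?(blocklen_gt0 p) // (mulnC B 2). Qed.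

Definition pos_block (p : 'I_N) : 'I_B := Ordinal (pos_block_proof p).
Definition pos_side (p : 'I_N) : bool := odd (p %/ n').
Definition pos_offset (p : 'I_N) : 'I_n' := Ordinal (ltn_pmod p (blocklen_gt0 p)).

Lemma blockposE (p : 'I_N) : blockpos (pos_block p) (pos_side p) (pos_offset p) = p.
Proof. by apply: val_inj; rewrite /= /pos_side -modn2 [(2 * _)%N]mulnC -!divn_eq. Qed.

Section Projections.
Variables (i : 'I_B) (b : bool) (j : 'I_n').

Lemma blockpos_div : ((blockpos i b j) %/ n' = 2 * i + b)%N.
Proof.
have lt_jn := ltn_ord j.
by rewrite divnMDl ?(leq_ltn_trans (leq0n j)) // divn_small // addn0.
Qed.

Lemma pos_block_blockpos : pos_block (blockpos i b j) = i.
Proof.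
apply: val_inj; rewrite /= blockpos_div [(2 * i)%N]mulnC divnMDl //.
by case: b; rewrite ?addn0.
Qed.

Lemma pos_side_blockpos : pos_side (blockpos i b j) = b.
Proof. by rewrite /pos_side blockpos_div oddD oddM addFb oddb. Qed.

Lemma pos_offset_blockpos : pos_offset (blockpos i b j) = j.
Proof. by apply: val_inj; rewrite /= modnMDl modn_small. Qed.

End Projections.

Lemma blockpos_eq (i i' : 'I_B) (b b' : bool) (j j' : 'I_n') :
  (blockpos i b j == blockpos i' b' j') = [&& i == i', b == b' & j == j'].
Proof.
apply/eqP/idP => [e | /and3P[/eqP-> /eqP-> /eqP->] //].
have := congr1 pos_block e; have := congr1 pos_side e; have := congr1 pos_offset e.
rewrite !pos_block_blockpos !pos_side_blockpos !pos_offset_blockpos.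
by move=> -> -> ->; rewrite !eqxx.
Qed.

End BlockCoordinates.

Section InnerProduct.
Variables (C : numClosedFieldType) (m : nat).

Lemma scale_cvecE (a : C) (v : cvec C m) x : (a *: v) x = a * v x.
Proof. by rewrite ffunE. Qed.

Lemma conjC_mul_ge0 (x : C) : 0 <= x^* * x.
Proof. by rewrite mulrC mul_conjC_ge0. Qed.

Lemma dotc_ge0 (u : cvec C m) : 0 <= dotc u u.
Proof. by apply: sumr_ge0 => x _; apply: conjC_mul_ge0. Qed.

Lemma dotc_sumr (T : finType) (v : cvec C m) (c : T -> C) (u : T -> cvec C m) :
  dotc v (\sum_t c t *: u t) = \sum_t c t * dotc v (u t).
Proof.
rewrite /dotc; under eq_bigr => x _ do rewrite sum_ffunE mulr_sumr.
rewrite exchange_big; apply: eq_bigr => t _; rewrite mulr_sumr.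
by apply: eq_bigr => x _; rewrite !ffunE mulrCA.
Qed.

Lemma dotc_sum (T : finType) (c d : T -> C) (u w : T -> cvec C m) :
  dotc (\sum_t c t *: u t) (\sum_t d t *: w t) =
  \sum_t \sum_t' (c t)^* * d t' * dotc (u t) (w t').
Proof.
rewrite /dotc; under eq_bigr => x _ do rewrite !sum_ffunE rmorph_sum mulr_suml.
rewrite exchange_big; apply: eq_bigr => t _.
under eq_bigr => x _ do rewrite mulr_sumr.
rewrite exchange_big; apply: eq_bigr => t' _; rewrite mulr_sumr.
by apply: eq_bigr => x _; rewrite !ffunE rmorphM mulrACA.
Qed.

Lemma dotc_sum_orthogonal (T : finType) (c : T -> C) (u : T -> cvec C m) :
  (forall t t', t != t' -> dotc (u t) (u t') = 0) ->
  dotc (\sum_t c t *: u t) (\sum_t c t *: u t) =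
  \sum_t (c t)^* * c t * dotc (u t) (u t).
Proof.
move=> u_orth; rewrite dotc_sum; apply: eq_bigr => t _.
by rewrite (bigD1 t) //= big1 ?addr0 // => t' t't; rewrite u_orth ?mulr0 // eq_sym.
Qed.

End InnerProduct.

Section BitFlip.
Variables (C : numClosedFieldType) (m : nat).
Implicit Types (i : 'I_m) (S : {set bits m.-1}) (phi : cvec C m).

Lemma flipK i : involutive (fun y : bits m => flip y i).
Proof. by move=> y; apply/ffunP => j; rewrite !ffunE addbK. Qed.

Lemma drop_coord_flip i y : drop_coord i (flip y i) = drop_coord i y.
Proof. by apply/ffunP => j; rewrite !ffunE eq_sym (negbTE (neq_lift i j)) addbF. Qed.

Definition flip_on i S y := if drop_coord i y \in S then flip y i else y.

Lemma flip_onK i S : involutive (flip_on i S).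
Proof.
move=> y; rewrite /flip_on; case yS: (drop_coord i y \in S); last by rewrite yS.
by rewrite drop_coord_flip yS flipK.
Qed.

Lemma E_bitflipE i S phi y : E_bitflip i S phi y = phi (flip_on i S y).
Proof.
rewrite /E_bitflip sum_ffunE (bigD1 (flip_on i S y)) //= big1 => [|x x_y].
  by rewrite scale_cvecE !ffunE -/(flip_on i S _) flip_onK eqxx mulr1 addr0.
rewrite scale_cvecE !ffunE -/(flip_on i S _); case: eqP => [e|]; last by rewrite mulr0.
by rewrite e flip_onK eqxx in x_y.
Qed.

Definition dflip i phi : cvec C m := [ffun x => phi x - phi (flip x i)].

Lemma dflip_sum i (T : finType) (c : T -> C) (u : T -> cvec C m) :
  dflip i (\sum_t c t *: u t) = \sum_t c t *: dflip i (u t).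
Proof.
apply/ffunP => x; rewrite !ffunE !sum_ffunE -sumrB.
by apply: eq_bigr => t _; rewrite !scale_cvecE ffunE mulrBr.
Qed.

Lemma E_bitflip_gap i S phi :
  2 * (dotc phi phi - dotc phi (E_bitflip i S phi)) =
  \sum_y (drop_coord i y \in S)%:R * ((dflip i phi y)^* * dflip i phi y).
Proof.
pose a y := (drop_coord i y \in S)%:R * ((phi y)^* * (phi y - phi (flip y i))).
have -> : dotc phi phi - dotc phi (E_bitflip i S phi) = \sum_y a y.
  rewrite /dotc -sumrB; apply: eq_bigr => y _; rewrite E_bitflipE /a /flip_on.
  by case: (_ \in S); rewrite ?mul1r ?mul0r ?subrr // mulrBr.
(* pair each y with flip y i, which has the same drop_coord *)
rewrite mulr_natl mulr2n {2}(reindex_inj (inv_inj (flipK i))) -big_split /=.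
apply: eq_bigr => y _; rewrite /a drop_coord_flip flipK !ffunE rmorphB /=.
by case: (_ \in S); rewrite ?mul1r ?mul0r ?addr0 //; ring.
Qed.

Lemma E_bitflip_ge i S phi (eps : C) :
  dotc (dflip i phi) (dflip i phi) <= 2 * eps * dotc phi phi ->
  (1 - eps) * `|dotc phi phi| <= `|dotc phi (E_bitflip i S phi)|.
Proof.
move=> dflip_le.
have gap := E_bitflip_gap i S phi.
set A := _ - _ in gap.
have two_gt0 : (0 : C) < 2 by rewrite ltr0n.
have A_ge0 : 0 <= A.
  rewrite -(pmulr_rge0 _ two_gt0) gap; apply: sumr_ge0 => y _.
  by rewrite mulr_ge0 ?ler0n ?conjC_mul_ge0.
have A_le : A <= eps * dotc phi phi.
  rewrite -(ler_pM2l two_gt0) mulrA; apply: le_trans dflip_le.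
  rewrite gap; apply: ler_sum => y _.
  by case: (_ \in S); rewrite ?mul1r ?mul0r ?conjC_mul_ge0.
have -> : dotc phi (E_bitflip i S phi) = dotc phi phi - A by rewrite opprB addrC subrK.
rewrite (ger0_norm (dotc_ge0 phi)); apply: le_trans (real_ler_norm _).
  by rewrite mulrBl mul1r lerB.
by rewrite rpredB // ger0_real // dotc_ge0.
Qed.

End BitFlip.

Section OrthogonalFamily.
Variables (C : numClosedFieldType) (m : nat) (T : finType) (u : T -> cvec C m).
Hypothesis u_orth : forall t t', t != t' -> dotc (u t) (u t') = 0.
Hypothesis u_gt0 : forall t, 0 < dotc (u t) (u t).

Lemma free_orthogonal : free (codom u).
Proof.
suff /freeP : forall k,
  \sum_(i < #|T|) k i *: (codom_tuple u)`_i = 0 -> forall i, k i = 0 by [].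
move=> k sum_eq0 i; have := congr1 (dotc (u (enum_val i))) sum_eq0.
rewrite (eq_bigr (fun i => k i *: u (enum_val i))) => [|i' _]; last by rewrite nth_codom.
rewrite dotc_sumr (bigD1 i) //= big1 ?addr0 => [|i' i'i]; last first.
  by rewrite u_orth ?mulr0 // (inj_eq enum_val_inj) eq_sym.
have -> : dotc (u (enum_val i)) 0 = 0 by rewrite /dotc big1 // => x _; rewrite ffunE mulr0.
by move/eqP; rewrite mulf_eq0 (gt_eqF (u_gt0 _)) orbF => /eqP.
Qed.

Lemma dim_span_orthogonal : \dim <<codom u>> = #|T|.
Proof. by rewrite (eqP free_orthogonal) size_codom. Qed.

Lemma span_orthogonalP phi :
  phi \in <<codom u>>%VS -> exists c : T -> C, phi = \sum_t c t *: u t.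
Proof.
case/(free_span free_orthogonal) => k -> _; exists (k \o u).
by rewrite big_image.
Qed.

End OrthogonalFamily.

Lemma dflip_sum_orthogonal_le (C : numClosedFieldType) (m : nat) (T : finType)
    (u : T -> cvec C m) (i : 'I_m) (r : C) (c : T -> C) :
  (forall t t', t != t' -> dotc (u t) (u t') = 0) ->
  (forall t t', t != t' -> dotc (dflip i (u t)) (dflip i (u t')) = 0) ->
  (forall t, dotc (dflip i (u t)) (dflip i (u t)) <= r * dotc (u t) (u t)) ->
  let phi := \sum_t c t *: u t in
  dotc (dflip i phi) (dflip i phi) <= r * dotc phi phi.
Proof.
move=> u_orth du_orth du_le /=.
rewrite dflip_sum !dotc_sum_orthogonal // mulr_sumr; apply: ler_sum => t _.
by rewrite mulrCA ler_wpM2l ?conjC_mul_ge0.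
Qed.

Section ProductVectors.
Variables (C : numClosedFieldType) (B n' : nat).
Local Notation N := (2 * B * n')%N.
Local Notation block := ('I_B * bool)%type.

Definition blocks (x : bits N) : {ffun block -> bits n'} := [ffun k => xblock x k.1 k.2].

Definition unblocks (X : {ffun block -> bits n'}) : bits N :=
  [ffun p => X (pos_block p, pos_side p) (pos_offset p)].

Lemma blocksK : cancel blocks unblocks.
Proof. by move=> x; apply/ffunP => p; rewrite !ffunE blockposE. Qed.

Lemma unblocksK : cancel unblocks blocks.
Proof.
move=> X; apply/ffunP => -[i b]; apply/ffunP => j.
by rewrite !ffunE pos_block_blockpos pos_side_blockpos pos_offset_blockpos.
Qed.

Lemma blocks_flip x i b j k :
  blocks (flip x (blockpos i b j)) k =
  if k == (i, b) then flip (blocks x k) j else blocks x k.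
Proof.
case: k => i' b'; apply/ffunP => j'; rewrite !ffunE blockpos_eq xpair_eqE.
by case: (i' == i); case: (b' == b); rewrite ?ffunE ?addbF.
Qed.

Definition prodv (G : block -> bits n' -> C) : cvec C N :=
  [ffun x => \prod_k G k (blocks x k)].

Lemma sum_prodv G : \sum_x prodv G x = \prod_k \sum_y G k y.
Proof.
rewrite bigA_distr_bigA (reindex blocks) /=; last first.
  by apply: onW_bij; exists unblocks; [apply: blocksK | apply: unblocksK].
by apply: eq_bigr => x _; rewrite ffunE.
Qed.

Lemma dotc_prodv G H :
  dotc (prodv G) (prodv H) = \prod_k \sum_y (G k y)^* * H k y.
Proof.
rewrite /dotc -sum_prodv; apply: eq_bigr => x _.
by rewrite !ffunE rmorph_prod -big_split.
Qed.

Lemma dotc_prodv_eq0 G H k :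
  \sum_y (G k y)^* * H k y = 0 -> dotc (prodv G) (prodv H) = 0.
Proof. by move=> GH0; rewrite dotc_prodv (bigD1 k) //= GH0 mul0r. Qed.

Lemma dflip_prodv G i b j :
  dflip (blockpos i b j) (prodv G) =
  prodv (fun k y => if k == (i, b) then G k y - G k (flip y j) else G k y).
Proof.
apply/ffunP => x; rewrite !ffunE.
rewrite (bigD1 (i, b)) //= [X in _ - X](bigD1 (i, b)) //= [RHS](bigD1 (i, b)) //=.
rewrite blocks_flip !eqxx mulrBl.
by congr (_ * _ - _ * _); apply: eq_bigr => k /negbTE kib; rewrite ?blocks_flip kib.
Qed.

End ProductVectors.

Lemma le_bigmax_nneg (R : numDomainType) (I : eqType) (r : seq I) (F : I -> R) j :
  (forall i, 0 <= F i) -> j \in r -> F j <= \big[Num.max/0]_(i <- r) F i.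
Proof.
move=> F_ge0; elim: r => // i r IHr; rewrite inE big_cons.
have maxr_real : \big[Num.max/0]_(i <- r) F i \is Num.real.
  by apply: bigmax_real => // i' _; apply: ger0_real.
rewrite comparable_le_max; last by rewrite real_comparable // ger0_real.
by case/orP => [/eqP-> | /IHr->]; rewrite ?lexx ?orbT.
Qed.

Lemma sum_dflip_le_infl (C : numClosedFieldType) (m : nat) (g : bits m -> C) (s : C) j :
  infl g <= s ->
  \sum_y (g y - g (flip y j))^* * (g y - g (flip y j)) <= #|{: bits m}|%:R * s.
Proof.
move=> infl_le; have card_gt0 : (0 : C) < #|{: bits m}|%:R.
  by rewrite ltr0n; apply/card_gt0P; exists [ffun => false].
rewrite -ler_pdivrMl //; under eq_bigr => y _ do rewrite -normCKC.
apply: le_trans infl_le; apply: (le_bigmax_nneg _ (mem_index_enum j)) => i.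
by rewrite mulr_ge0 ?invr_ge0 ?ler0n ?sumr_ge0 // => y _; rewrite exprn_ge0.
Qed.

Section BalancedFunction.
Variables (C : numClosedFieldType) (m : nat) (f : bits m -> C).
Hypothesis f_bal : balanced_pm_half f.

Lemma conj_balanced y : (f y)^* = f y.
Proof. by case: (f_bal.1 y) => ->; rewrite ?rmorphN fmorphV /= conjC_nat. Qed.

Lemma norm2_balanced y : (f y)^* * f y = 2^-1 * 2^-1.
Proof. by rewrite conj_balanced; case: (f_bal.1 y) => ->; rewrite ?mulrNN. Qed.

Lemma sum_balanced : \sum_y f y = 0.
Proof.
have [f_val [card_pos _]] := f_bal; set P := [set x | f x == 2^-1] in card_pos.
have card_neg : #|~: P| = #|P| by have := cardsC P; rewrite -card_pos; lia.
rewrite (bigID (mem P)) /=; under [X in _ + X]eq_bigl do rewrite -in_setC.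
rewrite (eq_bigr (fun=> 2^-1)) => [|y]; last by rewrite inE => /eqP.
rewrite [X in _ + X](eq_bigr (fun=> - 2^-1)) => [|y]; last first.
  by rewrite !inE; case: (f_val y) => ->; rewrite ?eqxx.
by rewrite !sumr_const card_neg mulNrn addrN.
Qed.

Lemma sum_conj_balanced : \sum_y (f y)^* * 1 = 0.
Proof. by under eq_bigr do rewrite mulr1; rewrite -rmorph_sum sum_balanced rmorph0. Qed.

End BalancedFunction.

Lemma exists_ffun_neq (I : finType) (T : eqType) (g h : {ffun I -> T}) :
  g != h -> exists i, g i != h i.
Proof.
move=> gh; apply/existsP; rewrite -negb_forall; apply: contra gh => /forallP gh.
by apply/eqP/ffunP => i; apply/eqP.
Qed.

Section ImmuneSubspace.
Variables (C : numClosedFieldType) (B n' : nat) (f : bits n' -> C).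
Hypothesis f_bal : balanced_pm_half f.
Local Notation N := (2 * B * n')%N.
Local Notation block := ('I_B * bool)%type.

(* f_z as a product over all 2B blocks: f on the blocks selected by z, 1 elsewhere *)
Definition fz_factor (z : bits B) (k : block) : bits n' -> C :=
  if z k.1 == k.2 then f else fun=> 1.

Lemma fz_prodv z : fz f z = prodv (fz_factor z).
Proof.
apply/ffunP => x; rewrite !ffunE.
rewrite [RHS](eq_bigr (fun k => fz_factor z (k.1, k.2) (blocks x (k.1, k.2)))) => [|[] //].
rewrite -(pair_bigA _ (fun i c => fz_factor z (i, c) (blocks x (i, c)))) /=.
apply: eq_bigr => i _.
by rewrite big_bool /fz_factor !ffunE /=; case: (z i); rewrite ?mulr1 ?mul1r.
Qed.

Lemma dotc_fz_orth (z w : bits B) : z != w -> dotc (fz f z) (fz f w) = 0.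
Proof.
case/exists_ffun_neq => i zw; rewrite !fz_prodv (dotc_prodv_eq0 (k := (i, z i))) //.
by rewrite /fz_factor /= eqxx eq_sym (negbTE zw) sum_conj_balanced.
Qed.

Lemma dotc_fz_factor z k :
  \sum_y (fz_factor z k y)^* * fz_factor z k y =
  (if z k.1 == k.2 then 2^-1 * 2^-1 else 1) * #|{: bits n'}|%:R.
Proof.
rewrite /fz_factor; case: ifP => _.
  rewrite (eq_bigr (fun=> 2^-1 * 2^-1)) ?sumr_const ?mulr_natr // => y _.
  exact: norm2_balanced.
by rewrite (eq_bigr (fun=> 1)) ?sumr_const ?mulr_natr // => y _; rewrite rmorph1 mulr1.
Qed.

Lemma dotc_fz_gt0 (z : bits B) : 0 < dotc (fz f z) (fz f z).
Proof.
rewrite fz_prodv dotc_prodv; apply: prodr_gt0 => k _; rewrite dotc_fz_factor.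
apply: mulr_gt0; last by rewrite ltr0n; apply/card_gt0P; exists [ffun => false].
by case: ifP => _; rewrite ?ltr01 // mulr_gt0 // invr_gt0 ltr0n.
Qed.

Lemma dotc_dflip_fz_orth (p : 'I_N) (z w : bits B) :
  z != w -> dotc (dflip p (fz f z)) (dflip p (fz f w)) = 0.
Proof.
case/exists_ffun_neq => i zw; rewrite -(blockposE p) !fz_prodv !dflip_prodv.
have [<- | ip] := eqVneq i (pos_block p).
  (* in the flipped block one of the two factors is constant, so its derivative vanishes *)
  apply: (dotc_prodv_eq0 (k := (i, pos_side p))); rewrite eqxx /fz_factor /=.
  have [zp | _] := eqVneq (z i) (pos_side p).
    by rewrite -zp eq_sym (negbTE zw) big1 // => y _; rewrite subrr mulr0.
  by rewrite big1 // => y _; rewrite subrr rmorph0 mul0r.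
apply: (dotc_prodv_eq0 (k := (i, z i))); rewrite xpair_eqE (negbTE ip) /fz_factor /=.
by rewrite eqxx eq_sym (negbTE zw) sum_conj_balanced.
Qed.

Lemma dotc_dflip_fz_le (s : C) (p : 'I_N) (z : bits B) :
  0 <= s -> infl f <= s ->
  dotc (dflip p (fz f z)) (dflip p (fz f z)) <= 2 * (2 * s) * dotc (fz f z) (fz f z).
Proof.
move=> s_ge0 infl_le; rewrite -(blockposE p) fz_prodv dflip_prodv !dotc_prodv.
set k := (pos_block p, pos_side p).
rewrite (bigD1 k) //= [X in _ <= _ * X](bigD1 k) //= eqxx [X in _ <= X]mulrA.
rewrite [X in _ * X <= _](eq_bigr (fun k' => \sum_y (fz_factor z k' y)^* * fz_factor z k' y));
  last by move=> k' /negbTE ->.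
apply: ler_wpM2r.
  by apply: prodr_ge0 => k' _; apply: sumr_ge0 => y _; apply: conjC_mul_ge0.
rewrite dotc_fz_factor /fz_factor; case: ifP => _.
  have -> : 2 * (2 * s) * (2^-1 * 2^-1 * #|{: bits n'}|%:R) = #|{: bits n'}|%:R * s by field.
  exact: sum_dflip_le_infl.
rewrite big1 => [|y _]; last by rewrite subrr mulr0.
by rewrite !mulr_ge0 ?ler0n.
Qed.

Lemma dim_Wspace : \dim (Wspace B f) = (2 ^ B)%N.
Proof.
rewrite (dim_span_orthogonal dotc_fz_orth dotc_fz_gt0).
by rewrite card_ffun card_bool card_ord.
Qed.

Lemma Wspace_immune (s : C) :
  0 <= s -> infl f <= s -> bitflip_immune (Wspace B f) (2 * s).
Proof.
move=> s_ge0 infl_le p S phi /(span_orthogonalP dotc_fz_orth dotc_fz_gt0) [c ->].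
apply: E_bitflip_ge; apply: dflip_sum_orthogonal_le => [z w | z w | z].
- exact: dotc_fz_orth.
- exact: dotc_dflip_fz_orth.
- exact: dotc_dflip_fz_le.
Qed.

End ImmuneSubspace.

Theorem theorem2 (C : numClosedFieldType) (B n' : nat) (s : C)
    (f : bits n' -> C) :
  (1 <= B)%N -> (1 <= n')%N -> 0 <= s ->
  balanced_pm_half f -> infl f <= s ->
  (2 ^ B <= \dim (@Wspace C B n' f))%N /\ bitflip_immune (@Wspace C B n' f) (2 * s).
Proof.
move=> _ _ s_ge0 f_bal infl_le; split; first by rewrite dim_Wspace.
exact: Wspace_immune.
Qed.
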